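(* Consider the stock-market Hamiltonian $$H=H_0+\lambda H_I,$$ $$H_0=\omega_a\,\hat n+\omega_c\,\hat k+\omega_p\,\hat P+\sum_{k\in\Lambda}\big(\Omega_A(k)\,\hat N_k+\Omega_C(k)\,\hat K_k+\Omega_O(k)\,\hat O_k\big),$$ $$H_I=\big(z^\dagger Z(f)+z\,Z^\dagger(\overline f)\big)+\big(p^\dagger o(g)+p\,o^\dagger(\overline g)\big),$$ with all symbols as defined in the context. Then the operators $$\hat N:=\hat n+\sum_{k\in\Lambda}\hat N_k,\qquad \hat K:=\hat k+\sum_{k\in\Lambda}\hat K_k,\qquad \hat\Gamma:=\hat P+\sum_{k\in\Lambda}\hat O_k$$ are constants of motion, i.e. $[H,\hat N]=[H,\hat K]=[H,\hat\Gamma]=0$.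
   Context: Let $\Lambda\subset\mathbb N$ be a finite index set (labelling the traders other than a fixed trader $\tau$). Consider bosonic annihilation operators $a,c,p$ and $A_k,C_k,o_k$ ($k\in\Lambda$) on a Fock space with vacuum $\varphi_0$ (annihilated by all of them), satisfying $[a,a^\dagger]=[c,c^\dagger]=[p,p^\dagger]=\mathbb 1$, $[A_i,A_j^\dagger]=[C_i,C_j^\dagger]=[o_i,o_j^\dagger]=\delta_{ij}\mathbb 1$, with all other commutators between these operators and their adjoints equal to zero. The Fock space is the closure of the span of the orthonormal number vectors obtained by applying normalized powers of the creation operators to $\varphi_0$. Set $\hat n=a^\dagger a$, $\hat k=c^\dagger c$, $\hat P=p^\dagger p$, $\hat N_k=A_k^\dagger A_k$, $\hat K_k=C_k^\dagger C_k$, $\hat O_k=o_k^\dagger o_k$. For a bosonic mode $c$ (resp. $C_k$), the operators $c^{\hat P}$ and $(c^\dagger)^{\hat P}$ are defined on number vectors $\varphi$ in which the $c$-mode has occupation $k$ and the $p$-mode has occupation $m$ by: $c^{\hat P}\varphi=\varphi$ if $m=0$; $c^{\hat P}\varphi=0$ if $m>k$; $c^{\hat P}\varphi=\sqrt{k(k-1)\cdots(k-m+1)}\,\varphi'$ if $k\ge m>0$, where $\varphi'$ is the same number vector with $c$-occupation $k-m$; and $(c^\dagger)^{\hat P}\varphi=\varphi$ if $m=0$, $(c^\dagger)^{\hat P}\varphi=\sqrt{(k+1)(k+2)\cdots(k+m)}\,\varphi''$ if $m>0$, where $\varphi''$ has $c$-occupation $k+m$ (all other occupations unchanged). Define $z=a\,(c^\dagger)^{\hat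 P}$, $Z_k=A_k\,(C_k^\dagger)^{\hat P}$, and smeared fields $Z(f)=\sum_{k\in\Lambda}f(k)Z_k$, $Z^\dagger(\overline f)=\sum_{k\in\Lambda}\overline{f(k)}Z_k^\dagger=\sum_{k\in\Lambda}\overline{f(k)}A_k^\dagger C_k^{\hat P}$, $o(g)=\sum_{k\in\Lambda}g(k)o_k$, $o^\dagger(\overline g)=\sum_{k\in\Lambda}\overline{g(k)}o_k^\dagger$, where $f,g:\Lambda\to\mathbb C$. Here $\lambda,\omega_a,\omega_c,\omega_p>0$ are real constants and $\Omega_A,\Omega_C,\Omega_O:\Lambda\to[0,\infty)$ are real functions. Commutators are understood formally (e.g. on finite linear combinations of number vectors). *)

From HB Require Import structures.
From mathcomp Require Import all_boot all_order all_algebra.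
Set Implicit Arguments. Unset Strict Implicit. Unset Printing Implicit Defensive.
Import Order.TTheory GRing.Theory Num.Theory.
Local Open Scope ring_scope.

Section Fock.
Variables (C : numClosedFieldType) (L : finType).

Inductive mode := Ma | Mc | Mp | MA of L | MC of L | MO of L.

(* A number vector is labelled by the occupation numbers of all the modes:
   (n_a, n_c, n_p, (N_k)_k, (K_k)_k, (O_k)_k). *)
Definition conf : Type :=
  (nat * nat * nat * {ffun L -> nat} * {ffun L -> nat} * {ffun L -> nat})%type.

Definition occ (m : mode) (s : conf) : nat :=
  let '(x1, x2, x3, fA, fC, fO) := s in
  match m with
  | Ma => x1 | Mc => x2 | Mp => x3
  | MA k => fA k | MC k => fC k | MO k => fO k
  end.

Definition setocc (m : mode) (n : nat) (s : conf) : conf :=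
  let '(x1, x2, x3, fA, fC, fO) := s in
  match m with
  | Ma => (n, x2, x3, fA, fC, fO)
  | Mc => (x1, n, x3, fA, fC, fO)
  | Mp => (x1, x2, n, fA, fC, fO)
  | MA k => (x1, x2, x3, [ffun i => if i == k then n else fA i], fC, fO)
  | MC k => (x1, x2, x3, fA, [ffun i => if i == k then n else fC i], fO)
  | MO k => (x1, x2, x3, fA, fC, [ffun i => if i == k then n else fO i])
  end.

(* Finite linear combinations of number vectors (formal sums). *)
Definition vec := seq (C * conf).
Definition coef (v : vec) (s : conf) : C :=
  \sum_(e <- v) (if e.2 == s then e.1 else 0).

(* Operators are given by their action on number vectors, extended linearly. *)
Definition op := conf -> vec.
Definition opapply (A : op) (v : vec) : vec :=
  flatten [seq [seq (e.1 * d.1, d.2) | d <- A e.2] | e <- v].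
Definition opzero : op := fun _ => [::].
Definition opadd (A B : op) : op := fun s => A s ++ B s.
Definition opscale (c : C) (A : op) : op :=
  fun s => [seq (c * d.1, d.2) | d <- A s].
Definition opcomp (A B : op) : op := fun s => opapply A (B s).
Definition opsum (F : L -> op) : op := fun s => flatten [seq F k s | k <- enum L].
Definition comm (A B : op) : op :=
  opadd (opcomp A B) (opscale (-1) (opcomp B A)).

Definition op_is_zero (A : op) : Prop :=
  forall (v : vec) (s : conf), coef (opapply A v) s = 0.

Definition ann (m : mode) : op := fun s =>
  match occ m s with
  | 0 => [::]
  | n.+1 => [:: (sqrtC (n.+1)%:R, setocc m n s)]
  end.
Definition cre (m : mode) : op := fun s =>
  [:: (sqrtC ((occ m s).+1)%:R, setocc m (occ m s).+1 s)].
Definition num (m : mode) : op := opcomp (cre m) (ann m).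

(* m^{\hat Q} and (m^dagger)^{\hat Q}, the exponent being the occupation of q *)
Definition annP (m q : mode) : op := fun s =>
  let k := occ m s in let j := occ q s in
  if j == 0%N then [:: (1, s)]
  else if (k < j)%N then [::]
  else [:: (sqrtC (\prod_(i < j) (k - i))%N%:R, setocc m (k - j) s)].
Definition creP (m q : mode) : op := fun s =>
  let k := occ m s in let j := occ q s in
  if j == 0%N then [:: (1, s)]
  else [:: (sqrtC (\prod_(i < j) (k + i.+1))%N%:R, setocc m (k + j) s)].

(* z = a (c^dagger)^P,  z^dagger = a^dagger c^P *)
Definition z_op : op := opcomp (ann Ma) (creP Mc Mp).
Definition zdag_op : op := opcomp (cre Ma) (annP Mc Mp).
(* Z_k = A_k (C_k^dagger)^P,  Z_k^dagger = A_k^dagger C_k^P *)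
Definition Zk (k : L) : op := opcomp (ann (MA k)) (creP (MC k) Mp).
Definition Zkdag (k : L) : op := opcomp (cre (MA k)) (annP (MC k) Mp).
Definition Zf (f : L -> C) : op := opsum (fun k => opscale (f k) (Zk k)).
Definition Zdagf (f : L -> C) : op :=
  opsum (fun k => opscale (f k)^* (Zkdag k)).
Definition of_ (g : L -> C) : op := opsum (fun k => opscale (g k) (ann (MO k))).
Definition odagf (g : L -> C) : op :=
  opsum (fun k => opscale (g k)^* (cre (MO k))).

Definition H0 (wa wc wp : C) (OA OC OO : L -> C) : op :=
  opadd (opadd (opadd (opscale wa (num Ma)) (opscale wc (num Mc)))
               (opscale wp (num Mp)))
        (opsum (fun k => opadd (opadd (opscale (OA k) (num (MA k)))
                                      (opscale (OC k) (num (MC k))))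
                               (opscale (OO k) (num (MO k))))).

Definition HI (f g : L -> C) : op :=
  opadd (opadd (opcomp zdag_op (Zf f)) (opcomp z_op (Zdagf f)))
        (opadd (opcomp (cre Mp) (of_ g)) (opcomp (ann Mp) (odagf g))).

Definition Ham (lam wa wc wp : C) (OA OC OO f g : L -> C) : op :=
  opadd (H0 wa wc wp OA OC OO) (opscale lam (HI f g)).

Definition Ntot : op := opadd (num Ma) (opsum (fun k => num (MA k))).
Definition Ktot : op := opadd (num Mc) (opsum (fun k => num (MC k))).
Definition Gtot : op := opadd (num Mp) (opsum (fun k => num (MO k))).

End Fock.

(* Each of N, K and Gamma is a weighted total occupation number, so it acts
   diagonally on number vectors, and an operator commutes with it as soon as it
   maps every number vector to number vectors with the same total. Every term
   of H has this property: H0 is diagonal; in z^dagger Z_k the operator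
   (C_k^dagger)^P creates exactly the occ(p) quanta that c^P destroys (occ(p)
   is untouched by both), while A_k and a^dagger trade one quantum. *)
From mathcomp Require Import all_boot all_order all_algebra zify.
Import Order.TTheory GRing.Theory Num.Theory.
Local Open Scope ring_scope.
Set Implicit Arguments.

Section FockCommutators.
Variables (C : numClosedFieldType) (L : finType).
Local Notation op := (op C L).
Local Notation vec := (vec C L).
Local Notation conf := (conf L).
Local Notation mode := (mode L).

Lemma coef_cat (u v : vec) t : coef (u ++ v) t = coef u t + coef v t.
Proof. by rewrite /coef big_cat. Qed.

Lemma coef_scale (c : C) (u : vec) t :
  coef [seq (c * d.1, d.2) | d <- u] t = c * coef u t.
Proof.
rewrite /coef big_map mulr_sumr; apply: eq_bigr => d _ /=.
by case: ifP; rewrite ?mulr0.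
Qed.

Lemma coef_opapply (A : op) (v : vec) t :
  coef (opapply A v) t = \sum_(e <- v) e.1 * coef (A e.2) t.
Proof.
elim: v => [|e v IH]; first by rewrite /coef /opapply /= !big_nil.
by rewrite /opapply /= coef_cat coef_scale -/(opapply A v) IH big_cons.
Qed.

Definition diagonal (D : op) (q : conf -> nat) := forall s,
  (forall d, d \in D s -> d.2 = s) /\ \sum_(d <- D s) d.1 = (q s)%:R.

Definition op_moves (A : op) (R : conf -> conf -> Prop) :=
  forall s d, d \in A s -> R s d.2.

Lemma coef_diagonal D q s t : diagonal D q ->
  coef (D s) t = if s == t then (q s)%:R else 0.
Proof.
move=> /(_ s) [Ds sumDs]; rewrite /coef.
rewrite (eq_big_seq (fun d => if s == t then d.1 else 0)).
  by case: eqP => _; [rewrite sumDs | rewrite big1].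
by move=> d /Ds ->.
Qed.

(* On a number vector s, both A D and D A act as A s scaled by q s. *)
Lemma comm_diagonal_zero A D q : diagonal D q ->
  op_moves A (fun s t => q t = q s) -> op_is_zero (comm A D).
Proof.
move=> hD hA v t; rewrite coef_opapply big1 // => -[c s] _ /=.
apply/eqP; rewrite mulf_eq0; apply/orP; right; apply/eqP.
rewrite /comm /opadd /opscale coef_cat coef_scale /opcomp !coef_opapply.
have [Ds sumDs] := hD s.
rewrite (eq_big_seq (fun e => e.1 * coef (A s) t)); last by move=> e /Ds ->.
rewrite -mulr_suml sumDs.
rewrite (eq_big_seq (fun d => (if d.2 == t then d.1 else 0) * (q s)%:R)).
  by rewrite -mulr_suml -/(coef (A s) t) mulrC mulN1r subrr.
move=> d /hA qd; rewrite (coef_diagonal _ _ hD) qd.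
by case: ifP; rewrite ?mulr0 ?mul0r.
Qed.

Lemma diagonal_add D1 D2 q1 q2 : diagonal D1 q1 -> diagonal D2 q2 ->
  diagonal (opadd D1 D2) (fun s => q1 s + q2 s)%N.
Proof.
move=> h1 h2 s; have [D1s sum1] := h1 s; have [D2s sum2] := h2 s; split.
  by move=> d; rewrite mem_cat => /orP [/D1s | /D2s].
by rewrite /opadd big_cat sum1 sum2 natrD.
Qed.

Lemma diagonal_sum (F : L -> op) q : (forall k, diagonal (F k) (q k)) ->
  diagonal (opsum F) (fun s => \sum_(k : L) q k s)%N.
Proof.
move=> hF s; split.
  by move=> d /flattenP [x /mapP [k _ ->]]; have [Fks _] := hF k s; apply: Fks.
rewrite /opsum big_flatten /= big_map natr_sum big_enum /=.
by apply: eq_bigr => k _; have [_ ->] := hF k s.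
Qed.

Lemma diagonal_ext D q q' : diagonal D q -> q =1 q' -> diagonal D q'.
Proof. by move=> hD e s; have [Ds sumDs] := hD s; rewrite -e. Qed.

Lemma op_moves_weaken A (R R' : conf -> conf -> Prop) :
  op_moves A R -> (forall s t, R s t -> R' s t) -> op_moves A R'.
Proof. by move=> hA hR s d /hA; apply: hR. Qed.

Lemma op_moves_comp A B RA RB : op_moves A RA -> op_moves B RB ->
  op_moves (opcomp A B) (fun s t => exists u, RB s u /\ RA u t).
Proof.
move=> hA hB s d /flattenP [x /mapP [e he ->] /mapP [d' hd' ->]] /=.
by exists e.2; split; [exact: hB | exact: hA].
Qed.

Lemma op_moves_add A B R : op_moves A R -> op_moves B R -> op_moves (opadd A B) R.
Proof. by move=> hA hB s d; rewrite mem_cat => /orP [/hA | /hB]. Qed.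

Lemma op_moves_scale c A R : op_moves A R -> op_moves (opscale c A) R.
Proof. by move=> hA s d /mapP [d' /hA + ->]. Qed.

Lemma op_moves_sum (F : L -> op) R :
  (forall k, op_moves (F k) R) -> op_moves (opsum F) R.
Proof. by move=> hF s d /flattenP [x /mapP [k _ ->] /hF]. Qed.

Definition charge (w : mode -> nat) (s : conf) : nat :=
  let '(na, nc, np, nA, nC, nO) := s in
  (w (Ma L) * na + w (Mc L) * nc + w (Mp L) * np +
   \sum_(k : L) (w (MA k) * nA k + w (MC k) * nC k + w (MO k) * nO k))%N.

Definition conserves (A : op) (w : mode -> nat) :=
  op_moves A (fun s t => charge w t = charge w s).

Lemma charge_setocc w m n s :
  (charge w (setocc m n s) + w m * occ m s = charge w s + w m * n)%N.
Proof.
case: s => [[[[[na nc] np] nA] nC] nO]; case: m => [| | |k|k|k] /=; try lia.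
all: rewrite (bigD1 k) // [X in _ = (_ + X + _)%N](bigD1 k) //= ffunE eqxx.
all: under eq_bigr => i ik do rewrite ffunE (negbTE ik).
all: lia.
Qed.

Lemma occ_setocc (m : mode) n s : occ m (setocc m n s) = n.
Proof.
by case: s => [[[[[na nc] np] nA] nC] nO]; case: m => [| | |k|k|k] //=;
  rewrite ffunE eqxx.
Qed.

Lemma setocc_setocc (m : mode) a b s : setocc m a (setocc m b s) = setocc m a s.
Proof.
case: s => [[[[[na nc] np] nA] nC] nO]; case: m => [| | |k|k|k] //=.
all: by congr (_, _, _, _, _, _); apply/ffunP => i; rewrite !ffunE; case: eqP.
Qed.

Lemma setocc_occ (m : mode) s : setocc m (occ m s) s = s.
Proof.
case: s => [[[[[na nc] np] nA] nC] nO]; case: m => [| | |k|k|k] //=.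
all: by congr (_, _, _, _, _, _); apply/ffunP => i; rewrite !ffunE; case: eqP => // ->.
Qed.

Definition p_weight (m : mode) : nat := if m is Mp then 1 else 0.

Lemma charge_p_weight s : charge p_weight s = occ (Mp L) s.
Proof.
case: s => [[[[[na nc] np] nA] nC] nO] /=; rewrite big1 => [|i _]; first lia.
by rewrite !mul0n.
Qed.

Lemma diagonal_num (m : mode) : diagonal (num C m) (occ m).
Proof.
move=> s; rewrite /num /opcomp /opapply /ann; case E: (occ m s) => [|n] /=.
  by split => [d|]; rewrite ?big_nil.
rewrite /cre occ_setocc setocc_setocc -E setocc_occ; split.
  by move=> d; rewrite inE => /eqP ->.
by rewrite big_seq1 -expr2 sqrtCK.
Qed.

Lemma diagonal_total (m : mode) (mk : L -> mode) :
  diagonal (opadd (num C m) (opsum (fun k => num C (mk k))))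
           (fun s => occ m s + \sum_(k : L) occ (mk k) s)%N.
Proof.
by apply: diagonal_add; [|apply: diagonal_sum => k]; apply: diagonal_num.
Qed.

Lemma op_moves_ann (m : mode) :
  op_moves (ann C m) (fun s t => forall w, charge w t + w m = charge w s)%N.
Proof.
move=> s d; rewrite /ann; case E: (occ m s) => [|n] //.
by rewrite inE => /eqP -> /= w; have := charge_setocc w m n s; rewrite E; lia.
Qed.

Lemma op_moves_cre (m : mode) :
  op_moves (cre C m) (fun s t => forall w, charge w t = charge w s + w m)%N.
Proof.
move=> s d; rewrite inE => /eqP -> /= w.
by have := charge_setocc w m (occ m s).+1 s; lia.
Qed.

Lemma op_moves_annP (m q : mode) : op_moves (annP C m q)
  (fun s t => forall w, charge w t + w m * occ q s = charge w s)%N.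
Proof.
move=> s d; rewrite /annP; case: eqP => [q0|_].
  by rewrite inE => /eqP -> /= w; rewrite q0 muln0 addn0.
case: ltnP => // qm; rewrite inE => /eqP -> /= w.
by have := charge_setocc w m (occ m s - occ q s) s; nia.
Qed.

Lemma op_moves_creP (m q : mode) : op_moves (creP C m q)
  (fun s t => forall w, charge w t = charge w s + w m * occ q s)%N.
Proof.
move=> s d; rewrite /creP; case: eqP => [q0|_].
  by rewrite inE => /eqP -> /= w; rewrite q0 muln0 addn0.
by rewrite inE => /eqP -> /= w; have := charge_setocc w m (occ m s + occ q s) s; nia.
Qed.

Lemma conserves_num (m : mode) w : conserves (num C m) w.
Proof.
rewrite /conserves /num.
apply: op_moves_weaken (op_moves_comp (op_moves_cre m) (op_moves_ann m)) _.
by move=> s t [u [hu ht]]; have := hu w; have := ht w; lia.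
Qed.

Definition symmetric_weight (w : mode -> nat) := forall k,
  [/\ w (MA k) = w (Ma L), w (MC k) = w (Mc L) & w (MO k) = w (Mp L)].

(* Neither factor touches the occupation of p, so the exponent occ(p) is the
   same before and after. *)
Lemma op_moves_ann_creP (ma mc : mode) :
  p_weight ma = 0%N -> p_weight mc = 0%N ->
  op_moves (opcomp (ann C ma) (creP C mc (Mp L))) (fun s t =>
    occ (Mp L) t = occ (Mp L) s /\
    forall w, charge w t + w ma = charge w s + w mc * occ (Mp L) s)%N.
Proof.
move=> pa pc; apply: op_moves_weaken (op_moves_comp (op_moves_ann _) (op_moves_creP _ _)) _.
move=> s t [u [hu ht]]; have := hu p_weight; have := ht p_weight.
rewrite !charge_p_weight pa pc; split=> [|w]; first lia.
by have := hu w; have := ht w; lia.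
Qed.

Lemma op_moves_cre_annP (ma mc : mode) :
  p_weight ma = 0%N -> p_weight mc = 0%N ->
  op_moves (opcomp (cre C ma) (annP C mc (Mp L))) (fun s t =>
    occ (Mp L) t = occ (Mp L) s /\
    forall w, charge w t + w mc * occ (Mp L) s = charge w s + w ma)%N.
Proof.
move=> pa pc; apply: op_moves_weaken (op_moves_comp (op_moves_cre _) (op_moves_annP _ _)) _.
move=> s t [u [hu ht]]; have := hu p_weight; have := ht p_weight.
rewrite !charge_p_weight pa pc; split=> [|w]; first lia.
by have := hu w; have := ht w; lia.
Qed.

Lemma op_moves_Zf (f : L -> C) : op_moves (Zf f) (fun s t =>
  occ (Mp L) t = occ (Mp L) s /\ forall w, symmetric_weight w ->
  charge w t + w (Ma L) = charge w s + w (Mc L) * occ (Mp L) s)%N.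
Proof.
apply: op_moves_sum => k; apply: op_moves_scale.
apply: op_moves_weaken (op_moves_ann_creP (MA k) (MC k) erefl erefl) _.
by move=> s t [pt ht]; split=> // w /(_ k) [<- <- _].
Qed.

Lemma op_moves_Zdagf (f : L -> C) : op_moves (Zdagf f) (fun s t =>
  occ (Mp L) t = occ (Mp L) s /\ forall w, symmetric_weight w ->
  charge w t + w (Mc L) * occ (Mp L) s = charge w s + w (Ma L))%N.
Proof.
apply: op_moves_sum => k; apply: op_moves_scale.
apply: op_moves_weaken (op_moves_cre_annP (MA k) (MC k) erefl erefl) _.
by move=> s t [pt ht]; split=> // w /(_ k) [<- <- _].
Qed.

Lemma op_moves_of (g : L -> C) : op_moves (of_ g) (fun s t =>
  forall w, symmetric_weight w -> charge w t + w (Mp L) = charge w s)%N.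
Proof.
apply: op_moves_sum => k; apply: op_moves_scale.
by apply: op_moves_weaken (op_moves_ann _) _ => s t ht w /(_ k) [_ _ <-].
Qed.

Lemma op_moves_odagf (g : L -> C) : op_moves (odagf g) (fun s t =>
  forall w, symmetric_weight w -> charge w t = charge w s + w (Mp L))%N.
Proof.
apply: op_moves_sum => k; apply: op_moves_scale.
by apply: op_moves_weaken (op_moves_cre _) _ => s t ht w /(_ k) [_ _ <-].
Qed.

Lemma conserves_HI (f g : L -> C) w : symmetric_weight w -> conserves (HI f g) w.
Proof.
move=> w_sym; have zdag := op_moves_cre_annP (Ma L) (Mc L) erefl erefl.
have z := op_moves_ann_creP (Ma L) (Mc L) erefl erefl.
repeat apply: op_moves_add.
- apply: op_moves_weaken (op_moves_comp zdag (op_moves_Zf f)) _.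
  move=> s t [u [[pu hu] [_ ht]]]; have := hu w w_sym; have := ht w.
  by rewrite pu; lia.
- apply: op_moves_weaken (op_moves_comp z (op_moves_Zdagf f)) _.
  move=> s t [u [[pu hu] [_ ht]]]; have := hu w w_sym; have := ht w.
  by rewrite pu; lia.
- apply: op_moves_weaken (op_moves_comp (op_moves_cre _) (op_moves_of g)) _.
  by move=> s t [u [hu ht]]; have := hu w w_sym; have := ht w; lia.
- apply: op_moves_weaken (op_moves_comp (op_moves_ann _) (op_moves_odagf g)) _.
  by move=> s t [u [hu ht]]; have := hu w w_sym; have := ht w; lia.
Qed.

Lemma conserves_Ham w lam wa wc wp (OA OC OO f g : L -> C) :
  symmetric_weight w -> conserves (Ham lam wa wc wp OA OC OO f g) w.
Proof.
move=> w_sym; apply: op_moves_add; last first.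
  by apply: op_moves_scale; apply: conserves_HI.
by repeat (apply: op_moves_add || apply: op_moves_scale || apply: conserves_num
           || apply: op_moves_sum => k).
Qed.

Definition N_weight (m : mode) : nat := if m is (Ma | MA _) then 1 else 0.
Definition K_weight (m : mode) : nat := if m is (Mc | MC _) then 1 else 0.
Definition Gamma_weight (m : mode) : nat := if m is (Mp | MO _) then 1 else 0.

Lemma diagonal_Ntot : diagonal (@Ntot C L) (charge N_weight).
Proof.
apply: diagonal_ext (diagonal_total _ _) _ => -[[[[[na nc] np] nA] nC] nO] /=.
by under [X in _ = (_ + X)%N]eq_bigr => i _ do rewrite mul1n !mul0n !addn0; lia.
Qed.

Lemma diagonal_Ktot : diagonal (@Ktot C L) (charge K_weight).
Proof.
apply: diagonal_ext (diagonal_total _ _) _ => -[[[[[na nc] np] nA] nC] nO] /=.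
by under [X in _ = (_ + X)%N]eq_bigr => i _ do rewrite mul1n !mul0n add0n addn0; lia.
Qed.

Lemma diagonal_Gtot : diagonal (@Gtot C L) (charge Gamma_weight).
Proof.
apply: diagonal_ext (diagonal_total _ _) _ => -[[[[[na nc] np] nA] nC] nO] /=.
by under [X in _ = (_ + X)%N]eq_bigr => i _ do rewrite mul1n !mul0n !add0n; lia.
Qed.

End FockCommutators.

Theorem proposition1 (C : numClosedFieldType) (L : finType)
  (lam wa wc wp : C) (OA OC OO f g : L -> C)
  (Hlam : 0 < lam) (Hwa : 0 < wa) (Hwc : 0 < wc) (Hwp : 0 < wp)
  (HOA : forall k, 0 <= OA k) (HOC : forall k, 0 <= OC k)
  (HOO : forall k, 0 <= OO k) :
  op_is_zero (comm (Ham lam wa wc wp OA OC OO f g) (@Ntot C L)) /\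
  op_is_zero (comm (Ham lam wa wc wp OA OC OO f g) (@Ktot C L)) /\
  op_is_zero (comm (Ham lam wa wc wp OA OC OO f g) (@Gtot C L)).
Proof.
have conserved w := @conserves_Ham C L w lam wa wc wp OA OC OO f g.
split; [|split]; apply: comm_diagonal_zero.
- exact: diagonal_Ntot.
- exact: conserved.
- exact: diagonal_Ktot.
- exact: conserved.
- exact: diagonal_Gtot.
- exact: conserved.
Qed.
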